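(* Let $(X,d)$ be a separable metric space, $T\colon X\to X$ a Borel measurable map and $\mu$ a $T$-invariant Borel probability measure on $X$ such that $(X,T,\mu)$ is weakly mixing. Let $(s_n)_{n\ge1}$ be a scale sequence which is either monotone or steady. Then the proximality gauge $\psi(x,y)=\liminf_{n\to\infty} s_n\, d(T^nx,T^ny)$ is $\mu\times\mu$-almost everywhere constant (its push-forward of $\mu\times\mu$ is a Dirac measure on $[0,\infty]$). In particular, writing $\psi_\alpha(x,y)=\liminf_{n} n^\alpha d(T^nx,T^ny)$ and \[C_\psi=\sup\big(\{0\}\cup\{\alpha>0:\ \psi_\alpha(x,y)=0 \text{ for } \mu\times\mu\text{-a.e. }(x,y)\}\big),\] one has $\psi_\alpha=0$ $\mu\times\mu$-a.e. if $0\le\alpha<C_\psi$, and $\psi_\alpha=\infty$ $\mu\times\mu$-a.e. if $C_\psi<\alpha<\infty$.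
   Context: A scale sequence is a sequence $(s_n)_{n\ge1}$ of positive reals with $s_n\to\infty$. It is monotone if $s_{n+1}\ge s_n$ for all sufficiently large $n$, and steady if $\lim_{n\to\infty}s_{n+1}/s_n=1$. Weakly mixing means $T\times T$ is ergodic with respect to $\mu\times\mu$. *)

From HB Require Import structures.
From mathcomp Require Import all_boot all_order all_algebra.
From mathcomp Require Import all_classical all_reals all_analysis.
Set Implicit Arguments. Unset Strict Implicit. Unset Printing Implicit Defensive.
Import Order.TTheory GRing.Theory Num.Theory.
Import numFieldNormedType.Exports.
Local Open Scope classical_set_scope.
Local Open Scope ring_scope.

Section defs.
Context {R : realType} {X : Type}.

Definition is_metric (dist : X -> X -> R) : Prop :=
  [/\ forall x y, 0 <= dist x y,
      forall x y, dist x y = 0 <-> x = y,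
      forall x y, dist x y = dist y x &
      forall x y z, dist x z <= dist x y + dist y z].

Definition metric_open (dist : X -> X -> R) (A : set X) : Prop :=
  forall x, A x -> exists2 e : R, 0 < e & [set y | dist x y < e] `<=` A.

Definition metric_separable (dist : X -> X -> R) : Prop :=
  exists D : set X, countable D /\
    forall x (e : R), 0 < e -> exists2 y, D y & dist x y < e.
End defs.

(* scale sequence, indexed by n >= 1 (the value s 0 is irrelevant) *)
Definition scale_sequence {R : realType} (s : nat -> R) : Prop :=
  (forall n, (0 < n)%N -> 0 < s n) /\ s @ \oo --> +oo.

Definition monotone_seq {R : realType} (s : nat -> R) : Prop :=
  exists N, forall n, (N <= n)%N -> s n <= s n.+1.

Definition steady_seq {R : realType} (s : nat -> R) : Prop :=
  (fun n => s n.+1 / s n) @ \oo --> (1 : R).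

Definition prox_gauge {R : realType} {X : Type} (dist : X -> X -> R)
  (T : X -> X) (s : nat -> R) (z : X * X) : \bar R :=
  limn_einf (fun n => (s n * dist (iter n T z.1) (iter n T z.2))%:E).

Definition prox_gauge_pow {R : realType} {X : Type} (dist : X -> X -> R)
  (T : X -> X) (alpha : R) : X * X -> \bar R :=
  prox_gauge dist T (fun n => (n%:R) `^ alpha).

Definition prod_map {X : Type} (T : X -> X) (z : X * X) : X * X :=
  (T z.1, T z.2).

From HB Require Import structures.
From mathcomp Require Import all_boot all_order all_algebra.
From mathcomp Require Import all_classical all_reals all_analysis.
From mathcomp Require Import measurable_realfun lra.
Import Order.TTheory GRing.Theory Num.Theory numFieldNormedType.Exports.
Local Open Scope classical_set_scope.
Local Open Scope ring_scope.

(* The gauge is measurable because, X being separable, the distance is a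
   countable infimum of measurable functions on X x X.  Shifting time by one
   step, psi(Tx, Ty) is the liminf of s_n d(T^(n+1) x, T^(n+1) y): for a
   steady scale this is psi(x, y), for a monotone one it is at most psi(x, y).
   Hence each sublevel set {psi < r} is invariant under T x T, or contained in
   its preimage, and in both cases has measure 0 or 1 by weak mixing; a
   function all of whose sublevel sets have measure 0 or 1 is a.e. constant.
   For the scales n^a this constant is 0 below the critical exponent and +oo
   above it, because a finite gauge at exponent b forces a zero gauge at every
   exponent a < b. *)

Section ereal_liminf.
Context {R : realType}.
Local Open Scope ereal_scope.
Implicit Types (u v : nat -> \bar R) (z w : \bar R).

Lemma lte_EFin_between z w : z < w -> exists y : R, z < y%:E < w.
Proof.
case: z => [z||]; case: w => [w||] //=.
- move=> zw; exists ((z + w) / 2)%R; rewrite !lte_fin; by have [-> ->] := midf_lt zw.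
- by move=> _; exists (z + 1)%R; rewrite ltry andbT lte_fin ltrDl.
- by move=> _; exists (w - 1)%R; rewrite ltNyr /= lte_fin; lra.
- by move=> _; exists 0%R; rewrite ltNyr ltry.
Qed.

Lemma lee_EFin_below w z : (forall y : R, y%:E < w -> y%:E <= z) -> w <= z.
Proof.
move=> H; rewrite leNgt; apply/negP => /lte_EFin_between[y /andP[zy yw]].
by move: (H y yw); rewrite leNgt zy.
Qed.

Lemma lee_EFin_above w z : (forall y : R, w < y%:E -> z <= y%:E) -> z <= w.
Proof.
move=> H; rewrite leNgt; apply/negP => /lte_EFin_between[y /andP[wy yz]].
by move: (H y wy); rewrite leNgt yz.
Qed.

Lemma limn_einfE u : limn_einf u = ereal_sup (range (einfs u)).
Proof. by rewrite limn_einf_lim; apply/cvg_lim => //; exact: cvg_einfs_sup. Qed.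

Lemma limn_einf_gt u z : z < limn_einf u -> exists N, forall n, (N <= n)%N -> z < u n.
Proof.
rewrite limn_einfE => /ereal_sup_gtP [_ [N _ <-] zl].
exists N => n Nn; apply: (lt_le_trans zl).
by apply: ereal_inf_lbound; exists n.
Qed.

Lemma limn_einf_ge u w :
  (forall y : R, y%:E < w -> exists N, forall n, (N <= n)%N -> y%:E < u n) ->
  w <= limn_einf u.
Proof.
move=> H; apply: lee_EFin_below => y /H [N HN].
rewrite limn_einfE; apply: (@le_trans _ _ (einfs u N)).
  by apply/ereal_infP => _ [n /= Nn <-]; exact/ltW/HN.
by apply: ereal_sup_ubound; exists N.
Qed.

Lemma le_limn_einf N u v : (forall n, (N <= n)%N -> u n <= v n) ->
  limn_einf u <= limn_einf v.
Proof.
move=> uv; apply: limn_einf_ge => y /limn_einf_gt [M HM].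
exists (maxn N M) => n; rewrite geq_max => /andP[Nn Mn].
exact: lt_le_trans (HM _ Mn) (uv _ Nn).
Qed.

Lemma limn_einfS u : limn_einf (fun n => u n.+1) = limn_einf u.
Proof.
apply/eqP; rewrite eq_le; apply/andP; split; apply: limn_einf_ge => y /limn_einf_gt [N HN].
- by exists N.+1 => -[|n]// Nn; exact: HN.
- by exists N => n Nn; apply: HN; exact: leqW.
Qed.

Lemma limn_einf_ge0 u : (forall n, 0 <= u n) -> 0 <= limn_einf u.
Proof.
move=> u0; apply: limn_einf_ge => y y0; exists 0%N => n _.
exact: lt_le_trans y0 (u0 n).
Qed.

Local Close Scope ereal_scope.

Lemma limn_einf_le_mul_cvg1 (N : nat) (c b : nat -> R) : c @ \oo --> (1 : R) ->
  (forall n, (N <= n)%N -> 0 <= b n) ->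
  (limn_einf (fun n => (b n)%:E) <= limn_einf (fun n => (c n * b n)%:E))%E.
Proof.
move=> c1 b0; apply: limn_einf_ge => y yL.
have [M _ c_gt0] := @cvgr_gt _ _ _ _ _ _ c1 0 ltr01.
have [y0|y0] := ltP y 0.
  exists (maxn N M) => n; rewrite geq_max => /andP[Nn Mn].
  rewrite lte_fin (lt_le_trans y0)// mulr_ge0 ?b0//; exact/ltW/c_gt0.
have [y' /andP[yy' y'L]] := lte_EFin_between _ _ yL.
have y'0 : 0 < y' by rewrite -lte_fin (le_lt_trans _ yy')// lee_fin.
have [K HK] := limn_einf_gt _ _ y'L.
have [|M' _ c_gt] := @cvgr_gt _ _ _ _ _ _ c1 (y / y') _.
  by rewrite ltr_pdivrMr// mul1r -lte_fin.
exists (maxn K M') => n; rewrite geq_max => /andP[Kn Mn].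
have := HK _ Kn; rewrite !lte_fin => y'b.
have cpos : 0 < c n by apply: le_lt_trans (c_gt _ Mn); rewrite divr_ge0// ltW.
apply: (lt_le_trans (y := c n * y')); last by rewrite ler_pM2l// ltW.
by rewrite -ltr_pdivrMr//; exact: c_gt.
Qed.

Lemma limn_einf_mul_cvgy (c u : nat -> R) : c @ \oo --> +oo ->
  (0 < limn_einf (fun n => (u n)%:E))%E ->
  limn_einf (fun n => (c n * u n)%:E) = +oo%E.
Proof.
move=> /cvgryPgt c_oo /lte_EFin_between[y /andP[y0 yu]]; rewrite lte_fin in y0.
apply/eqP; rewrite eq_le leey /=; apply: limn_einf_ge => x _.
have [N uN] := limn_einf_gt _ _ yu.
have [M _ cM] := c_oo (`|x| / y).
exists (maxn N M) => n; rewrite geq_max => /andP[Nn Mn].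
have := uN _ Nn; rewrite !lte_fin => yun.
have /= xc := cM _ Mn.
have c0 : 0 < c n by apply: le_lt_trans xc; rewrite divr_ge0 ?normr_ge0 ?ltW.
apply: le_lt_trans (ler_norm x) _.
apply: (lt_le_trans (y := c n * y)); first by rewrite -ltr_pdivrMr.
by rewrite ler_pM2l// ltW.
Qed.

End ereal_liminf.

Section ae_bounds.
Local Open Scope ereal_scope.
Context {d} {Y : measurableType d} {R : realType}.
Variables (P : {measure set Y -> \bar R}) (f : Y -> \bar R).

Lemma ae_ereal_sup_le (S : set (\bar R)) :
  (forall x, S x -> {ae P, forall z, x <= f z}) ->
  {ae P, forall z, ereal_sup S <= f z}.
Proof.
have [->|S0] := eqVneq S set0; first by rewrite ereal_sup0 => _; apply: aeW => z; exact: leNye.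
move=> Sf; have [u Su u_sup] := ereal_sup_seq S0.
have := ae_foralln (fun n => Sf _ (Su n)); apply: filterS => z uf.
rewrite -(cvg_lim _ u_sup)//; apply: lime_le; last exact: nearW.
by apply/cvg_ex; exists (ereal_sup S).
Qed.

Lemma ae_le_ereal_inf (S : set (\bar R)) :
  (forall x, S x -> {ae P, forall z, f z <= x}) ->
  {ae P, forall z, f z <= ereal_inf S}.
Proof.
have [->|S0] := eqVneq S set0; first by rewrite ereal_inf0 => _; apply: aeW => z; exact: leey.
move=> Sf; have [u Su u_inf] := ereal_inf_seq S0.
have := ae_foralln (fun n => Sf _ (Su n)); apply: filterS => z fu.
rewrite -(cvg_lim _ u_inf)//; apply: lime_ge; last exact: nearW.
by apply/cvg_ex; exists (ereal_inf S).
Qed.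

End ae_bounds.

Section ae_const.
Local Open Scope ereal_scope.
Context {d} {Y : measurableType d} {R : realType}.

Lemma ae_const_of_sublevel01 (P : probability Y R) (f : Y -> \bar R) :
  measurable_fun setT f ->
  (forall r : R, P [set z | f z < r%:E] = 0 \/ P [set z | f z < r%:E] = 1) ->
  exists c, {ae P, forall z, f z = c}.
Proof.
move=> mf f01.
have mlt (r : R) : measurable [set z | f z < r%:E].
  by rewrite -[X in measurable X]setTI; exact: emeasurable_fun_infty_o.
pose c := ereal_sup [set r%:E | r in [set r | P [set z | f z < r%:E] = 0]].
pose c' := ereal_inf [set r%:E | r in [set r | P [set z | f z < r%:E] = 1]].
have c_le : {ae P, forall z, c <= f z}.
  apply: ae_ereal_sup_le => _ [r P0 <-].
  exists [set z | f z < r%:E]; split => // z /=.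
  by move/negP; rewrite -ltNge.
have le_c' : {ae P, forall z, f z <= c'}.
  apply: ae_le_ereal_inf => _ [r P1 <-].
  exists (~` [set z | f z < r%:E]); split.
  - exact: measurableC.
  - by have := probability_setC P (mlt r); rewrite P1 subee.
  - by move=> z /= + /ltW.
have c'_le_c : c' <= c.
  apply: lee_EFin_above => r cr; apply: ereal_inf_lbound; exists r => //.
  have [P0|//] := f01 r.
  have : r%:E <= c by apply: ereal_sup_ubound; exists r.
  by rewrite leNgt cr.
exists c; apply: filterS2 c_le le_c' => z cf fc'.
by apply/eqP; rewrite eq_le cf (le_trans fc').
Qed.

End ae_const.

Lemma measurable_iter {d} {Y : measurableType d} (S : Y -> Y) k :
  measurable_fun setT S -> measurable_fun setT (iter k S).
Proof.
move=> mS; elim: k => [|k IH] /=; first exact: measurable_id.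
exact: measurableT_comp.
Qed.

Lemma measurable_prod_map {d} {X : measurableType d} (T : X -> X) :
  measurable_fun setT T -> measurable_fun setT (prod_map T).
Proof.
move=> mT; apply: measurable_fun_pair.
- exact: measurableT_comp mT measurable_fst.
- exact: measurableT_comp mT measurable_snd.
Qed.

Section invariance.
Local Open Scope ereal_scope.
Context {d} {X : measurableType d} {R : realType}.

Lemma product_measure_prod_map_invariant (mu : probability X R) (T : X -> X) :
  measurable_fun setT T ->
  (forall A, measurable A -> mu (T @^-1` A) = mu A) ->
  forall B, measurable B -> (mu \x mu) (prod_map T @^-1` B) = (mu \x mu) B.
Proof.
move=> mT Tinv B mB; rewrite /product_measure1 /=.
transitivity (\int[mu]_x (mu \o xsection B) (T x)).
  apply: eq_integral => x _ /=.
  rewrite (_ : xsection (prod_map T @^-1` B) x = T @^-1` xsection B (T x)).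
    by rewrite Tinv//; exact: measurable_xsection.
  by rewrite !xsectionE.
transitivity (\int[pushforward mu T]_u (mu \o xsection B) u).
  rewrite ge0_integral_pushforward//.
  exact: (@measurable_fun_xsection _ _ X X R mu B mB).
by apply: eq_measure_integral => A mA _; exact: Tinv.
Qed.

(* The increasing union of the preimages [S^-k A] is invariant and, by
   continuity from below, has the measure of [A]. *)
Lemma subinvariant_measure01 (P : probability X R) (S : X -> X) (A : set X) :
  measurable_fun setT S ->
  (forall B, measurable B -> P (S @^-1` B) = P B) ->
  (forall B, measurable B -> S @^-1` B = B -> P B = 0 \/ P B = 1) ->
  measurable A -> A `<=` S @^-1` A -> P A = 0 \/ P A = 1.
Proof.
move=> mS Sinv Serg mA AS.
pose F k := iter k S @^-1` A.
have mF k : measurable (F k).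
  by rewrite /F -[X in measurable X]setTI; exact: measurable_iter.
have FS k : F k.+1 = S @^-1` F k.
  by apply/funext => z; rewrite /F /preimage /= -iterSr.
have PF k : P (F k) = P A by elim: k => [//|k IH]; rewrite FS Sinv ?mF.
have PU : P (\bigcup_k F k) = P A.
  have ndF : nondecreasing_seq F.
    by apply/nondecreasing_seqP => k; apply/subsetPset => z /AS.
  rewrite -(cvg_lim _ (nondecreasing_cvg_mu mF (bigcupT_measurable _ mF) ndF))//.
  by rewrite (_ : P \o F = cst (P A)) ?lim_cst//; apply/funext => k /=; rewrite PF.
rewrite -PU; apply: Serg; first exact: bigcupT_measurable.
apply/seteqP; split => z /=.
- by move=> [k _ Fk]; exists k.+1 => //; rewrite FS.
- move=> [[|k] _]; first by move=> /AS Az; exists 0%N.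
  by rewrite FS => Fk; exists k.
Qed.

End invariance.

Section metric_measurability.
Context {d} {X : measurableType d} {R : realType} (dist : X -> X -> R).
Hypothesis dist_metric : is_metric dist.
Hypothesis measurable_metric : measurable = <<s [set A | metric_open dist A] >>.

Lemma measurable_dist p : measurable_fun setT (dist p).
Proof.
have [_ _ dsym dtri] := dist_metric.
apply: (measurability _ (RGenOInfty.measurableE R)) => //.
move=> _ [_ [r ->] <-]; rewrite setTI measurable_metric; apply: sub_sigma_algebra.
move=> x /=; rewrite in_itv /= andbT => rx.
exists (dist p x - r); first by rewrite subr_gt0.
move=> y /= hxy; rewrite in_itv /= andbT.
have := dtri p y x; rewrite (dsym y x); lra.
Qed.

Lemma measurable_distl p : measurable_fun setT (dist ^~ p).
Proof.
have [_ _ dsym _] := dist_metric.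
by rewrite (_ : dist ^~ p = dist p); [exact: measurable_dist | apply/funext => x; rewrite dsym].
Qed.

(* On a separable space [d x y] is the infimum of [d x e + d e y] over a
   countable dense set of points [e], a countable infimum of measurable maps. *)
Lemma measurable_dist_pair (x0 : X) : metric_separable dist ->
  measurable_fun setT (fun z : X * X => dist z.1 z.2).
Proof.
have [_ _ dsym dtri] := dist_metric.
move=> [D [cD dD]]; have [f injf] := countable_injP _ cD.
pose e n := 'pinv_(cst x0) D f n.
have eK p : D p -> e (f p) = p by move=> Dp; apply: pinvKV => //; rewrite inE.
pose g n (z : X * X) := (dist z.1 (e n) + dist (e n) z.2)%:E.
have mg n : measurable_fun setT (g n).
  apply/measurable_EFinP; apply: measurable_funD.
  - exact: measurableT_comp (measurable_distl _) measurable_fst.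
  - exact: measurableT_comp (measurable_dist _) measurable_snd.
apply/measurable_EFinP.
rewrite (_ : _ \o _ = fun z => einfs (g ^~ z) 0); first exact: measurable_fun_einfs.
apply/funext => z /=; apply/eqP; rewrite eq_le; apply/andP; split.
- by apply/ereal_infP => _ [n _ <-]; rewrite /g lee_fin; exact: dtri.
- apply: lee_EFin_above => y; rewrite lte_fin => dy.
  have [p Dp hp] := dD z.1 ((y - dist z.1 z.2) / 2) ltac:(lra).
  apply: (@le_trans _ _ (g (f p) z)); first by apply: ereal_inf_lbound; exists (f p).
  rewrite /g eK // lee_fin.
  have := dtri p z.1 z.2; rewrite (dsym p z.1); lra.
Qed.

End metric_measurability.

Section prox_gauge_shift.
Context {R : realType} {X : Type} (dist : X -> X -> R) (T : X -> X).
Hypothesis dist_ge0 : forall x y, 0 <= dist x y.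

Lemma prox_gauge_prod_map s z : prox_gauge dist T s (prod_map T z) =
  limn_einf (fun n => (s n * dist (iter n.+1 T z.1) (iter n.+1 T z.2))%:E).
Proof. by rewrite /prox_gauge; congr limn_einf; apply/funext => n; rewrite !iterSr. Qed.

Lemma prox_gaugeS s z : prox_gauge dist T s z =
  limn_einf (fun n => (s n.+1 * dist (iter n.+1 T z.1) (iter n.+1 T z.2))%:E).
Proof. by rewrite /prox_gauge -limn_einfS. Qed.

Lemma prox_gauge_prod_map_le s z : monotone_seq s ->
  (prox_gauge dist T s (prod_map T z) <= prox_gauge dist T s z)%E.
Proof.
move=> [N sS]; rewrite prox_gauge_prod_map prox_gaugeS.
by apply: (le_limn_einf N) => n Nn; rewrite lee_fin ler_wpM2r ?sS.
Qed.

(* Both [s_(n+1)/s_n] and [s_n/s_(n+1)] tend to [1], so shifting the scale by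
   one step changes the liminf in neither direction. *)
Lemma prox_gauge_prod_map_eq s z : scale_sequence s -> steady_seq s ->
  prox_gauge dist T s (prod_map T z) = prox_gauge dist T s z.
Proof.
move=> [s_gt0 _] s1; rewrite prox_gauge_prod_map prox_gaugeS.
have s1' : (fun n => s n / s n.+1) @ \oo --> (1 : R).
  rewrite -(eq_cvg _ _ (fun n => invf_div (s n.+1) (s n))).
  by have := cvgV (oner_neq0 R) s1; rewrite invr1; apply.
apply/eqP; rewrite eq_le; apply/andP; split.
- apply: le_trans (limn_einf_le_mul_cvg1 1 _ _ s1 _) _.
    by move=> n n1; rewrite mulr_ge0 ?dist_ge0 ?ltW ?s_gt0.
  apply: (le_limn_einf 1) => n n1.
  by rewrite mulrA divfK// gt_eqF ?s_gt0.
- apply: le_trans (limn_einf_le_mul_cvg1 0 _ _ s1' _) _.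
    by move=> n _; rewrite mulr_ge0 ?dist_ge0 ?ltW ?s_gt0.
  apply: (le_limn_einf 1) => n n1.
  by rewrite mulrA divfK// gt_eqF ?s_gt0.
Qed.

End prox_gauge_shift.

Lemma measurable_prox_gauge {R : realType} {d} {X : measurableType d}
    (dist : X -> X -> R) (T : X -> X) (s : nat -> R) :
  measurable_fun setT (fun z : X * X => dist z.1 z.2) ->
  measurable_fun setT T ->
  measurable_fun setT (prox_gauge dist T s).
Proof.
move=> md mT; rewrite /prox_gauge /limn_einf; apply: measurableT_comp => //.
apply: (measurable_fun_limn_esup
  (f := fun n z => - (s n * dist (iter n T z.1) (iter n T z.2))%:E)%E) => n.
apply: measurableT_comp => //; apply/measurable_EFinP.
apply: measurable_funM => //.
apply: (measurableT_comp md (g := fun z : X * X => (iter n T z.1, iter n T z.2))).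
by apply: measurable_fun_pair; apply: measurableT_comp (measurable_iter _ n mT) _.
Qed.

Lemma probability_nonempty {d} {X : measurableType d} {R : realType}
  (mu : probability X R) : [set: X] !=set0.
Proof.
apply/set0P/eqP => X0; have := probability_setT mu.
by rewrite X0 measure0 => /eqP; rewrite eq_sym; apply/negP; exact: oner_neq0.
Qed.

Section prox_gauge_ae_const.
Local Open Scope ereal_scope.
Context {d} {X : measurableType d} {R : realType} (dist : X -> X -> R).
Hypothesis dist_metric : is_metric dist.
Hypothesis dist_separable : metric_separable dist.
Hypothesis measurable_metric : measurable = <<s [set A | metric_open dist A] >>.
Variables (T : X -> X) (mu : probability X R).
Hypothesis mT : measurable_fun setT T.
Hypothesis mu_invariant : forall A, measurable A -> mu (T @^-1` A) = mu A.
Hypothesis mu_weak_mixing : forall B, measurable B -> prod_map T @^-1` B = B ->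
  (mu \x mu) B = 0 \/ (mu \x mu) B = 1.

Lemma prox_gauge_ae_const s : scale_sequence s -> monotone_seq s \/ steady_seq s ->
  exists c, {ae mu \x mu, forall z, prox_gauge dist T s z = c}.
Proof.
move=> s_scale s_reg; have [x0 _] := probability_nonempty mu.
have md := measurable_dist_pair _ dist_metric measurable_metric x0 dist_separable.
have mg := measurable_prox_gauge _ _ s md mT.
apply: ae_const_of_sublevel01 (mg) _ => r.
have mlt : measurable [set z | prox_gauge dist T s z < r%:E].
  by rewrite -[A in measurable A]setTI; exact: emeasurable_fun_infty_o.
have [dist_ge0 _ _ _] := dist_metric.
case: s_reg => [s_mono|s_steady].
- apply: (subinvariant_measure01 _ _ _ (measurable_prod_map _ mT)
      (product_measure_prod_map_invariant _ _ mT mu_invariant) mu_weak_mixing mlt).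
  by move=> z /= /(le_lt_trans (prox_gauge_prod_map_le _ _ dist_ge0 _ _ s_mono)).
- apply: mu_weak_mixing => //; apply/funext => z.
  by rewrite /preimage /= prox_gauge_prod_map_eq.
Qed.

End prox_gauge_ae_const.

Section power_scale.
Context {R : realType}.

Lemma cvgy_natr_powR (a : R) : 0 < a -> (fun n : nat => n%:R `^ a) @ \oo --> +oo.
Proof.
move=> a0; apply/cvgryPgt => K; pose M := Num.max K 1.
have M1 : 1 <= M by rewrite le_max lexx orbT.
have Ma : M = (M `^ a^-1) `^ a.
  by rewrite -powRrM mulVf ?gt_eqF// powRr1// (le_trans ler01 M1).
have /cvgryPgt/(_ (M `^ a^-1)) := @cvgr_idn R.
apply: filterS => n Mn; apply: (@le_lt_trans _ _ M); first by rewrite le_max lexx.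
by rewrite [X in X < _]Ma; apply: gt0_ltr_powR; rewrite ?nnegrE ?powR_ge0.
Qed.

Lemma scale_sequence_pow (a : R) : 0 < a -> scale_sequence (fun n : nat => n%:R `^ a).
Proof.
move=> a0; split; last exact: cvgy_natr_powR.
by move=> n n0; apply: powR_gt0; rewrite ltr0n.
Qed.

Lemma monotone_seq_pow (a : R) : 0 <= a -> monotone_seq (fun n : nat => n%:R `^ a).
Proof.
move=> a0; exists 0%N => n _.
by apply: ge0_ler_powR => //; rewrite ?nnegrE ?ler0n// ler_nat.
Qed.

End power_scale.

Section prox_gauge_pow.
Context {R : realType} {X : Type} (dist : X -> X -> R) (T : X -> X).
Hypothesis dist_ge0 : forall x y, 0 <= dist x y.

Lemma prox_gauge_pow_ge0 a z : (0 <= prox_gauge_pow dist T a z)%E.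
Proof. by apply: limn_einf_ge0 => n; rewrite lee_fin mulr_ge0 ?powR_ge0. Qed.

Lemma prox_gauge_pow_le a b z : a <= b ->
  (prox_gauge_pow dist T a z <= prox_gauge_pow dist T b z)%E.
Proof.
move=> ab; apply: (le_limn_einf 1) => n n1.
by rewrite lee_fin ler_wpM2r// ler_powR// ler1n.
Qed.

(* [n^b d_n = n^(b-a) (n^a d_n)] with [n^(b-a) -> +oo]. *)
Lemma prox_gauge_pow_eq0 a b z : a < b ->
  (prox_gauge_pow dist T b z < +oo)%E -> prox_gauge_pow dist T a z = 0%E.
Proof.
move=> ab gb; apply/eqP; rewrite eq_le prox_gauge_pow_ge0 andbT leNgt.
have ba : 0 < b - a by rewrite subr_gt0.
apply/negP => /(limn_einf_mul_cvgy _ _ (cvgy_natr_powR _ ba)) gy.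
move: gb; rewrite ltNge => /negP; apply.
rewrite -gy; apply: (le_limn_einf 1) => n n1.
by rewrite lee_fin mulrA -powRD ?subrK// pnatr_eq0 -lt0n n1 implybT.
Qed.

End prox_gauge_pow.

Section critical_exponent.
Local Open Scope ereal_scope.
Context {d} {Y : measurableType d} {R : realType}.
Variables (P : {measure set Y -> \bar R}) (g : R -> Y -> \bar R).

Definition critical_exponent : \bar R :=
  ereal_sup ([set 0] `|` [set a%:E | a in [set a : R | (0 < a)%R /\
    {ae P, forall z, g a z = 0}]]).

Hypothesis g_ge0 : forall a z, 0 <= g a z.
Hypothesis g_le : forall a b z, (a <= b)%R -> g a z <= g b z.
Hypothesis g_eq0 : forall a b z, (a < b)%R -> g b z < +oo -> g a z = 0.
Hypothesis g_ae_const : forall a, (0 < a)%R -> exists c, {ae P, forall z, g a z = c}.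

Lemma critical_exponent_ge0 : 0 <= critical_exponent.
Proof. by apply: ereal_sup_ubound; left. Qed.

Lemma ae_lt_critical_exponent a : (0 <= a)%R -> a%:E < critical_exponent ->
  {ae P, forall z, g a z = 0}.
Proof.
move=> a0 /ereal_sup_gtP [_ [->|[b [b0 gb] <-]] ab].
  by move: ab; rewrite lte_fin ltNge a0.
apply: filterS gb => z gbz; apply/eqP; rewrite eq_le g_ge0 andbT -gbz.
by apply: g_le; rewrite ltW// -lte_fin.
Qed.

Lemma ae_gt_critical_exponent a : critical_exponent < a%:E ->
  {ae P, forall z, g a z = +oo}.
Proof.
move=> Ca; have a0 : (0 < a)%R by rewrite -lte_fin (le_lt_trans critical_exponent_ge0).
have [c gc] := g_ae_const _ a0.
have [<-//|cy] := eqVneq c +oo.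
have [b /andP[Cb ba]] := lte_EFin_between _ _ Ca.
have gb : {ae P, forall z, g b z = 0}.
  by apply: filterS gc => z gz; apply: (g_eq0 _ a); rewrite ?gz ?ltey -?lte_fin.
have : b%:E <= critical_exponent.
  apply: ereal_sup_ubound; right; exists b => //; split => //.
  by rewrite -lte_fin (le_lt_trans critical_exponent_ge0).
by rewrite leNgt Cb.
Qed.

End critical_exponent.

Theorem proposition3p9 (dX : measure_display) (X : measurableType dX)
  (R : realType) (dist : X -> X -> R)
  (Hmetric : is_metric dist)
  (Hsep : metric_separable dist)
  (Hborel : @measurable dX X = <<s [set A | metric_open dist A] >>)
  (T : X -> X) (HT : measurable_fun [set: X] T)
  (mu : probability X R)
  (Hinv : forall A, measurable A -> mu (T @^-1` A) = mu A)
  (Hwm : forall B : set (X * X), measurable B ->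
      prod_map T @^-1` B = B ->
      ((mu \x mu)%E B = 0%E \/ (mu \x mu)%E B = 1%E)) :
  (forall s : nat -> R, scale_sequence s -> (monotone_seq s \/ steady_seq s) ->
     exists c : \bar R, {ae (mu \x mu)%E, forall z, prox_gauge dist T s z = c})
  /\
  (let Cpsi : \bar R :=
     ereal_sup ([set 0%E] `|`
       [set (a%:E) | a in [set a : R | 0 < a /\
          {ae (mu \x mu)%E, forall z, prox_gauge_pow dist T a z = 0%E}]]) in
   (forall alpha : R, 0 <= alpha -> (alpha%:E < Cpsi)%E ->
      {ae (mu \x mu)%E, forall z, prox_gauge_pow dist T alpha z = 0%E}) /\
   (forall alpha : R, (Cpsi < alpha%:E)%E ->
      {ae (mu \x mu)%E, forall z, prox_gauge_pow dist T alpha z = +oo%E})).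
Proof.
have [dist_ge0 _ _ _] := Hmetric.
have gauge_ae_const := prox_gauge_ae_const _ Hmetric Hsep Hborel _ _ HT Hinv Hwm.
split=> [|Cpsi]; first exact: gauge_ae_const.
have pow_ae_const a : 0 < a ->
    exists c, {ae (mu \x mu)%E, forall z, prox_gauge_pow dist T a z = c}.
  move=> a0; apply: gauge_ae_const; first exact: scale_sequence_pow.
  by left; apply/monotone_seq_pow/ltW.
split=> alpha.
- exact: ae_lt_critical_exponent (prox_gauge_pow_ge0 _ _ dist_ge0)
    (prox_gauge_pow_le _ _ dist_ge0) _.
- exact: ae_gt_critical_exponent (prox_gauge_pow_eq0 _ _ dist_ge0) pow_ae_const _.
Qed.
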